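(* Let $X$ be countable, $S$ a random variable on $X^m$, and $a\ge1$, $b\ge0$ integers with $a+b\le m$. Then $$I_S(a;b)\le a\cdot I_S(1;a+b-1),$$ where for integers $a',b'$ with $a'+b'\le m$, $I_S(a';b')=\mathbb E_{A,B}[I(S_A;S_B)]$ with $A$ a uniformly random $a'$-element subset of $[m]$ and $B$ a uniformly random $b'$-element subset of $[m]\setminus A$.
   Context: For $A\subseteq[m]$, $S_A=(S_j)_{j\in A}$. $I$ denotes mutual information; $I(S_A;S_\emptyset)=0$. *)

From HB Require Import structures.
From mathcomp Require Import all_boot all_order all_algebra.
From mathcomp Require Import all_classical all_reals all_analysis.
Set Implicit Arguments. Unset Strict Implicit. Unset Printing Implicit Defensive.
Import Order.TTheory GRing.Theory Num.Theory.
Local Open Scope classical_set_scope.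
Local Open Scope ring_scope.

(* A random variable S on X^m is represented by its law: a probability mass
   function on the (countable) outcome type {ffun 'I_m -> X}. *)
Definition is_pmf (R : realType) (T : choiceType) (p : T -> R) : Prop :=
  (forall x, 0 <= p x) /\ (\esum_(x in [set: T]) (p x)%:E)%E = 1%E.

(* S_A = (S_j)_{j in A}, encoded as the function that is Some (S j) on A and
   None off A (a faithful encoding of an element of X^A). *)
Definition restr (m : nat) (X : countType) (A : {set 'I_m})
  (x : {ffun 'I_m -> X}) : {ffun 'I_m -> option X} :=
  [ffun i => if i \in A then Some (x i) else None].

Definition pushpmf (R : realType) (T U : choiceType) (p : T -> R) (g : T -> U)
  (y : U) : R :=
  fine (\esum_(x in g @^-1` [set y]) (p x)%:E)%E.

Definition mi_term (R : realType) (T U V : choiceType) (p : T -> R)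
  (f : T -> U) (g : T -> V) (uv : U * V) : R :=
  let j := pushpmf p (fun x => (f x, g x)) uv in
  if j == 0 then 0
  else j * ln (j / (pushpmf p f uv.1 * pushpmf p g uv.2)).

Definition mutinf (R : realType) (T U V : choiceType) (p : T -> R)
  (f : T -> U) (g : T -> V) : \bar R :=
  ((\esum_(uv in [set: U * V]) (Num.max (mi_term p f g uv) 0)%:E)
   - (\esum_(uv in [set: U * V]) (Num.max (- mi_term p f g uv) 0)%:E))%E.

Definition MI (R : realType) (m : nat) (X : countType)
  (p : {ffun 'I_m -> X} -> R) (A B : {set 'I_m}) : \bar R :=
  mutinf p (restr A) (restr B).

Definition IS (R : realType) (m : nat) (X : countType)
  (p : {ffun 'I_m -> X} -> R) (a b : nat) : \bar R :=
  (\sum_(A : {set 'I_m} | #|A| == a)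
     ((('C(m, a))%:R^-1)%:E *
      \sum_(B : {set 'I_m} | (B \subset ~: A) && (#|B| == b))
         ((('C(m - a, b))%:R^-1)%:E * MI p A B)))%E.

(* Mutual information is the expectation of a log-ratio of marginals, so it
   obeys the chain rule I(S_{B u A}; S_C) = I(S_A; S_C) + I(S_B; S_C | S_A), and
   Gibbs' inequality makes every conditional term nonnegative.  Hence
   I(S_A; S_C) <= I(S_A; S_{B u C}) and
   I(S_{i u A}; S_B) <= I(S_A; S_B) + I(S_i; S_{A u B}); induction on |A| gives
   I(S_A; S_B) <= sum_{j in A} I(S_j; S_{(A u B) \ j}).  Averaging over (A, B),
   each pair (j, C) with j notin C and |C| = a+b-1 comes from C(a+b-1, a-1)
   triples (A, B, j), and the identity
   C(a+b-1, a-1) m C(m-1, a+b-1) = a C(m, a) C(m-a, b) turns the resulting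
   average into a I_S(1; a+b-1). *)

From mathcomp Require Import all_classical all_reals all_analysis.
(* Imported after the analysis libraries so that the [finset] names (set0,
   setUC, ...) take precedence over their [classical_sets] homonyms. *)
From mathcomp Require Import all_boot all_order all_algebra.
From mathcomp Require Import ring lra zify.
Set Implicit Arguments. Unset Strict Implicit. Unset Printing Implicit Defensive.
Import Order.TTheory GRing.Theory Num.Theory.
Local Open Scope ring_scope.

Section NonnegEsum.
Variable R : realType.
Local Open Scope classical_set_scope.
Local Open Scope ereal_scope.

Lemma ge0_esumZl (T : choiceType) (S : set T) (r : R) (a : T -> \bar R) :
  (0 <= r)%R -> (forall x, 0 <= a x) ->
  \esum_(i in S) (r%:E * a i) = r%:E * \esum_(i in S) a i.
Proof.
move=> r0 a0; rewrite /esum -ereal_supZl//; last first.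
  apply/set0P; exists 0; exists classical_sets.set0; first exact: fsets_set0.
  by rewrite fsbig_set0.
congr ereal_sup; apply/seteqP; split => x /=.
  by move=> [A FA <-]; exists (\sum_(i \in A) a i); [exists A|rewrite ge0_mule_fsumr].
by move=> [y [A FA <-] <-]; exists A => //; rewrite ge0_mule_fsumr.
Qed.

Lemma ge0_subset_esum (T : choiceType) (S S' : set T) (a : T -> \bar R) :
  S `<=` S' -> (forall x, 0 <= a x) ->
  \esum_(i in S) a i <= \esum_(i in S') a i.
Proof.
move=> SS' a0; rewrite esum_mkcond [leRHS]esum_mkcond.
apply: le_esum => i _; case: ifPn => Si; last by case: ifPn.
by rewrite mem_set //; apply: SS'; exact: set_mem.
Qed.

Lemma ge0_esum_fibers (T W : choiceType) (D : set T) (k : T -> W) (a : T -> \bar R) :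
  (forall x, 0 <= a x) ->
  \esum_(x in D) a x = \esum_(w in [set: W]) \esum_(x in D `&` k @^-1` [set w]) a x.
Proof.
move=> a0; rewrite esum_esum// (reindex_esum D _ (fun x => (k x, x))) //; split.
- by move=> x Dx; split => //; split.
- by move=> x y _ _ [].
- by move=> [w x] /= [_ [Dx kx]]; exists x => //=; rewrite kx.
Qed.

Lemma ge0_esum_pair (A B : choiceType) (F : A * B -> \bar R) :
  (forall t, 0 <= F t) ->
  \esum_(t in [set: A * B]) F t = \esum_(a in [set: A]) \esum_(b in [set: B]) F (a, b).
Proof.
move=> F0; rewrite esum_esum //.
have -> : [set: A] `*`` (fun=> [set: B]) = [set: A * B].
  by apply/seteqP; split => // -[].
by apply: eq_esum => -[].
Qed.

End NonnegEsum.

Definition joint (T U V : Type) (f : T -> U) (g : T -> V) (x : T) := (f x, g x).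

Section PushforwardPmf.
Variables (R : realType) (T : choiceType) (p : T -> R).
Hypothesis pmf_p : is_pmf p.
Local Open Scope classical_set_scope.
Let p_ge0 x : 0 <= p x := pmf_p.1 x.
Let p_sum1 : (\esum_(x in [set: T]) (p x)%:E)%E = 1%E := pmf_p.2.
Local Open Scope ereal_scope.

Lemma esum_pmf_ge0 (S : set T) : 0 <= \esum_(x in S) (p x)%:E.
Proof. by apply: esum_ge0 => x _; rewrite lee_fin. Qed.

Lemma esum_pmf_fin_num (S : set T) : \esum_(x in S) (p x)%:E \is a fin_num.
Proof.
rewrite ge0_fin_numE ?esum_pmf_ge0//; apply: (@le_lt_trans _ _ 1); last exact: ltry.
by rewrite -p_sum1; apply: ge0_subset_esum => // x; rewrite lee_fin.
Qed.

Lemma pushpmfE (U : choiceType) (f : T -> U) u :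
  (pushpmf p f u)%:E = \esum_(x in f @^-1` [set u]) (p x)%:E.
Proof. by rewrite /pushpmf fineK// esum_pmf_fin_num. Qed.

Lemma pushpmf_ge0 (U : choiceType) (f : T -> U) u : (0 <= pushpmf p f u)%R.
Proof. by rewrite -lee_fin pushpmfE esum_pmf_ge0. Qed.

Lemma pmf_le_pushpmf (U : choiceType) (f : T -> U) x : (p x <= pushpmf p f (f x))%R.
Proof.
rewrite -lee_fin pushpmfE -(@esum_set1 _ _ x (fun x => (p x)%:E)) ?lee_fin//.
by apply: ge0_subset_esum => [y ->//|y]; rewrite lee_fin.
Qed.

Lemma pushpmf_eq (U V : choiceType) (f : T -> U) (g : T -> V) x :
  (forall y, f y = f x <-> g y = g x) -> pushpmf p f (f x) = pushpmf p g (g x).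
Proof.
move=> fg; rewrite /pushpmf; congr (fine (esum _ _)).
by apply/seteqP; split => y /fg.
Qed.

Lemma esum_pmf_comp (W : choiceType) (k : T -> W) (c : W -> R) :
  (forall w, 0 <= c w)%R ->
  \esum_(x in [set: T]) (p x * c (k x))%:E =
  \esum_(w in [set: W]) (pushpmf p k w * c w)%:E.
Proof.
move=> c0; rewrite (ge0_esum_fibers _ k); last by move=> x; rewrite lee_fin mulr_ge0.
apply: eq_esum => w _; rewrite classical_sets.setTI.
rewrite (eq_esum (b := fun x => (c w)%:E * (p x)%:E)); last first.
  by move=> x; rewrite /preimage /= => ->; rewrite -EFinM mulrC.
by rewrite ge0_esumZl // -pushpmfE -EFinM mulrC.
Qed.

Lemma esum_pushpmf (W : choiceType) (k : T -> W) :
  \esum_(w in [set: W]) (pushpmf p k w)%:E = 1.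
Proof.
rewrite -p_sum1 (ge0_esum_fibers _ k); last by move=> x; rewrite lee_fin.
by apply: eq_esum => w _; rewrite classical_sets.setTI pushpmfE.
Qed.

Lemma esum_pushpmf_joint (U W : choiceType) (f : T -> U) (g : T -> W) w :
  \esum_(u in [set: U]) (pushpmf p (joint f g) (u, w))%:E = (pushpmf p g w)%:E.
Proof.
rewrite pushpmfE (ge0_esum_fibers _ f); last by move=> x; rewrite lee_fin.
apply: eq_esum => u _; rewrite pushpmfE; congr esum.
by apply/seteqP; split => y; rewrite /preimage /joint /= => -[] -> ->.
Qed.

End PushforwardPmf.

Lemma maxr0_cases (R : realDomainType) (y : R) :
  (0 <= y /\ Num.max y 0 = y) \/ (y < 0 /\ Num.max y 0 = 0).
Proof. by case: (lerP 0 y) => h; [left|right]. Qed.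

Lemma maxr0_ge0 (R : realDomainType) (y : R) : 0 <= Num.max y 0.
Proof. by rewrite le_max lexx orbT. Qed.

Section Expectation.
Variables (R : realType) (T : choiceType).
Local Open Scope classical_set_scope.
Local Open Scope ereal_scope.

Definition esum_pos (a : T -> R) := \esum_(x in [set: T]) (Num.max (a x) 0)%:E.
Definition esum_neg (a : T -> R) := \esum_(x in [set: T]) (Num.max (- a x) 0)%:E.

(* Positive parts minus negative parts, exactly as [mutinf] is defined. *)
Definition expect (p f : T -> R) :=
  esum_pos (fun x => p x * f x)%R - esum_neg (fun x => p x * f x)%R.

Lemma esum_pos_ge0 a : 0 <= esum_pos a.
Proof. by apply: esum_ge0 => x _; rewrite lee_fin maxr0_ge0. Qed.

Lemma esum_neg_ge0 a : 0 <= esum_neg a.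
Proof. by apply: esum_ge0 => x _; rewrite lee_fin maxr0_ge0. Qed.

Lemma esum_pos_negD (a b1 b2 : T -> R) : (forall x, a x = b1 x + b2 x)%R ->
  esum_neg b1 \is a fin_num -> esum_neg b2 \is a fin_num ->
  esum_neg a \is a fin_num /\
  esum_pos a - esum_neg a = (esum_pos b1 - esum_neg b1) + (esum_pos b2 - esum_neg b2).
Proof.
move=> ab fin1 fin2.
have maxE (y : R) : 0 <= (Num.max y 0)%:E by rewrite lee_fin maxr0_ge0.
have neg_le : esum_neg a <= esum_neg b1 + esum_neg b2.
  rewrite /esum_neg -esumD; try by move=> x _; rewrite maxE.
  apply: le_esum => x _; rewrite -EFinD lee_fin.
  have := ab x; case: (maxr0_cases (- a x)) => -[? ->];
  case: (maxr0_cases (- b1 x)) => -[? ->]; case: (maxr0_cases (- b2 x)) => -[? ->]; lra.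
have fin_a : esum_neg a \is a fin_num.
  rewrite ge0_fin_numE ?esum_neg_ge0//; apply: le_lt_trans neg_le _.
  by rewrite ltey_eq fin_numD fin1 fin2.
split => //.
have balance : esum_pos a + (esum_neg b1 + esum_neg b2) =
    esum_pos b1 + esum_pos b2 + esum_neg a.
  rewrite /esum_pos /esum_neg -!esumD; try by move=> x _; rewrite ?adde_ge0 ?maxE.
  apply: eq_esum => x _; rewrite -!EFinD; congr EFin.
  have := ab x.
  case: (maxr0_cases (a x)) => -[? ->]; case: (maxr0_cases (- a x)) => -[? ->];
  case: (maxr0_cases (b1 x)) => -[? ->]; case: (maxr0_cases (- b1 x)) => -[? ->];
  case: (maxr0_cases (b2 x)) => -[? ->]; case: (maxr0_cases (- b2 x)) => -[? ->]; lra.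
move: balance (esum_pos_ge0 a) (esum_pos_ge0 b1) (esum_pos_ge0 b2).
rewrite -(fineK fin_a) -(fineK fin1) -(fineK fin2).
case: (esum_pos a) => [ra| |]; case: (esum_pos b1) => [r1| |];
  case: (esum_pos b2) => [r2| |] //=; rewrite ?EFinN /adde /= => -[]// E _ _ _.
by congr EFin; lra.
Qed.

Section Weights.
Variable p : T -> R.
Hypothesis p_ge0 : forall x, (0 <= p x)%R.

Lemma expectD (f g1 g2 : T -> R) :
  (forall x, 0 < p x -> f x = g1 x + g2 x)%R ->
  esum_neg (fun x => p x * g1 x)%R \is a fin_num ->
  esum_neg (fun x => p x * g2 x)%R \is a fin_num ->
  esum_neg (fun x => p x * f x)%R \is a fin_num /\
  expect p f = expect p g1 + expect p g2.
Proof.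
move=> fE; apply: esum_pos_negD => x.
have := p_ge0 x; rewrite le0r => /orP[/eqP->|/fE->]; last by rewrite mulrDr.
by rewrite !mul0r addr0.
Qed.

End Weights.

Section Gibbs.
Variable p : T -> R.
Hypothesis pmf_p : is_pmf p.
Let p_ge0 x : (0 <= p x)%R := pmf_p.1 x.

(* Gibbs' inequality: sum [p ln (1/s) >= p (1 - s)] over [x]. *)
Lemma expect_ln_ge0 (phi s : T -> R) :
  (forall x, 0 <= s x)%R ->
  (forall x, 0 < p x -> 0 < s x /\ phi x = ln (s x)^-1)%R ->
  \esum_(x in [set: T]) (p x * s x)%:E <= 1 ->
  esum_neg (fun x => p x * phi x)%R \is a fin_num /\ 0 <= expect p phi.
Proof.
move=> s_ge0 phiE sum_le1.
have ps_ge0 x : (0 <= p x * s x)%R by rewrite mulr_ge0.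
have pointwise x : (Num.max (- (p x * phi x)) 0 <= p x * s x /\
    p x + Num.max (- (p x * phi x)) 0 <= Num.max (p x * phi x) 0 + p x * s x)%R.
  have := p_ge0 x; rewrite le0r => /orP[/eqP->|px].
    by rewrite !mul0r oppr0 !maxxx addr0.
  have [sx ->] := phiE x px.
  have ln_le : (ln (s x) <= s x - 1)%R.
    by have := @le_ln1Dx R (s x - 1); rewrite addrCA subrr addr0; apply; lra.
  have : (p x - p x * s x <= p x * ln (s x)^-1)%R.
    rewrite lnV ?posrE // -mulrN; have : (0 <= p x * (s x - 1 - ln (s x)))%R.
      by apply: mulr_ge0; lra.
    by rewrite !mulrBr mulr1; lra.
  have := ps_ge0 x.
  by case: (maxr0_cases (- (p x * ln (s x)^-1))) => -[? ->];
     case: (maxr0_cases (p x * ln (s x)^-1)) => -[? ->]; split; lra.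
have neg_le : esum_neg (fun x => p x * phi x)%R <= \esum_(x in [set: T]) (p x * s x)%:E.
  by apply: le_esum => x _; rewrite lee_fin; case: (pointwise x).
have fin_neg : esum_neg (fun x => p x * phi x)%R \is a fin_num.
  rewrite ge0_fin_numE ?esum_neg_ge0 //; apply: le_lt_trans neg_le _.
  by apply: le_lt_trans sum_le1 _; rewrite ltry.
split => //; rewrite /expect suber_ge0 //.
have : 1 + esum_neg (fun x => p x * phi x)%R <=
    esum_pos (fun x => p x * phi x)%R + \esum_(x in [set: T]) (p x * s x)%:E.
  rewrite -pmf_p.2 /esum_neg /esum_pos -!esumD;
    try by move=> x _; rewrite lee_fin ?maxr0_ge0 ?p_ge0.
  by apply: le_esum => x _; rewrite -!EFinD lee_fin; case: (pointwise x).
move/le_trans/(_ (leeD2l (esum_pos (fun x => p x * phi x)%R) sum_le1)).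
by rewrite addeC leeD2rE.
Qed.

End Gibbs.
End Expectation.

Section Densities.
Variables (R : realType) (T : choiceType) (p : T -> R).
Hypothesis pmf_p : is_pmf p.
Local Open Scope classical_set_scope.
Let p_ge0 x : 0 <= p x := pmf_p.1 x.

Definition dens (U : choiceType) (f : T -> U) x := pushpmf p f (f x).

Local Open Scope ereal_scope.

(* The weights [P(f = u, g = w) P(h = v | g = w)] of the Markov chain f - g - h. *)
Lemma esum_markov_le1 (U V W : choiceType) (f : T -> U) (g : T -> W) (h : T -> V) :
  \esum_(t in [set: W * (U * V)]) (pushpmf p (joint f g) (t.2.1, t.1) *
     (pushpmf p (joint h g) (t.2.2, t.1) / pushpmf p g t.1))%:E <= 1.
Proof.
have push0 := pushpmf_ge0 pmf_p.
rewrite ge0_esum_pair => [|t]; last by rewrite lee_fin mulr_ge0 ?divr_ge0 ?push0.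
rewrite -(esum_pushpmf pmf_p g); apply: le_esum => w _.
rewrite ge0_esum_pair => [|t]; last by rewrite lee_fin mulr_ge0 ?divr_ge0 ?push0.
set q := pushpmf p g w.
have q0 : (0 <= q^-1)%R by rewrite invr_ge0 push0.
have inner u : \esum_(v in [set: V]) (pushpmf p (joint f g) (u, w) *
    (pushpmf p (joint h g) (v, w) / q))%:E = (q^-1 * q * pushpmf p (joint f g) (u, w))%:E.
  rewrite (eq_esum (b := fun v => (pushpmf p (joint f g) (u, w) / q)%:E *
    (pushpmf p (joint h g) (v, w))%:E)) => [|v _]; last by rewrite -EFinM; congr EFin; ring.
  rewrite ge0_esumZl ?mulr_ge0 ?push0 // => [|v]; last by rewrite lee_fin push0.
  by rewrite (esum_pushpmf_joint pmf_p) -EFinM -/q; congr EFin; ring.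
under eq_esum do rewrite /= inner EFinM.
rewrite ge0_esumZl ?mulr_ge0 ?push0 // => [|u]; last by rewrite lee_fin push0.
rewrite (esum_pushpmf_joint pmf_p) -EFinM lee_fin.
have := push0 _ g w; rewrite -/q le0r => /orP[/eqP->|q_gt0]; first by rewrite mulr0.
by rewrite mulVf ?gt_eqF // mul1r.
Qed.

Lemma esum_cmi_ratio_le1 (U V W : choiceType) (f : T -> U) (g : T -> W) (h : T -> V) :
  \esum_(x in [set: T]) (p x * (dens (joint f g) x * dens (joint h g) x /
     (dens (joint g (joint f h)) x * dens g x)))%:E <= 1.
Proof.
have push0 := pushpmf_ge0 pmf_p.
pose k := joint g (joint f h).
pose c (t : W * (U * V)) := (pushpmf p (joint f g) (t.2.1, t.1) *
   pushpmf p (joint h g) (t.2.2, t.1) /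
   (pushpmf p k t * pushpmf p g t.1))%R.
rewrite [leLHS](esum_pmf_comp pmf_p k (c := c)) => [|t]; last first.
  by rewrite divr_ge0 ?mulr_ge0.
apply: le_trans (esum_markov_le1 f g h); apply: le_esum => -[w [u v]] _.
rewrite lee_fin /c /=.
have := push0 _ k (w, (u, v)); rewrite le0r => /orP[/eqP->|k_gt0].
  by rewrite mul0r mulr_ge0 ?divr_ge0 ?push0.
have := push0 _ g w; rewrite le0r => /orP[/eqP->|g_gt0].
  by rewrite !mulr0 invr0 !mulr0.
by rewrite le_eqVlt; apply/orP; left; apply/eqP; field; rewrite !gt_eqF.
Qed.

Lemma mutinf_expect (U V : choiceType) (f : T -> U) (g : T -> V) (phi : T -> R) :
  (forall x, 0 < p x -> phi x = ln (dens (joint f g) x / (dens f x * dens g x)))%R ->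
  mutinf p f g = expect p phi.
Proof.
move=> phiE; pose k := joint f g.
pose L (uv : U * V) := ln (pushpmf p k uv / (pushpmf p f uv.1 * pushpmf p g uv.2)).
have pphiE x : (p x * phi x = p x * L (k x))%R.
  by have := p_ge0 x; rewrite le0r => /orP[/eqP->|/phiE->]; rewrite ?mul0r.
have mi_termE uv : mi_term p f g uv = (pushpmf p k uv * L uv)%R.
  by rewrite /mi_term; case: ifPn => [/eqP e|//]; rewrite /k /joint e mul0r.
have maxr0M (r y : R) : (0 <= r -> Num.max (r * y) 0 = r * Num.max y 0)%R.
  by move=> r0; rewrite maxr_pMr ?mulr0.
rewrite /mutinf /expect /esum_pos /esum_neg; congr (_ - _).
  apply/esym; under eq_esum do rewrite /= pphiE maxr0M //.
  rewrite (esum_pmf_comp pmf_p k (c := fun w => Num.max (L w) 0%R)) => [|w];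
    last exact: maxr0_ge0.
  by apply: eq_esum => uv _; rewrite mi_termE maxr0M // pushpmf_ge0.
apply/esym; under eq_esum do rewrite /= pphiE -mulrN maxr0M //.
rewrite (esum_pmf_comp pmf_p k (c := fun w => Num.max (- L w)%R 0%R)) => [|w];
  last exact: maxr0_ge0.
by apply: eq_esum => uv _; rewrite mi_termE -mulrN maxr0M // pushpmf_ge0.
Qed.

End Densities.

Lemma restr_eq (m : nat) (X : countType) (A : {set 'I_m}) (x y : {ffun 'I_m -> X}) :
  restr A y = restr A x <-> {in A, forall i, y i = x i}.
Proof.
split => [/ffunP yx i iA|yx]; first by have := yx i; rewrite !ffunE iA => -[].
by apply/ffunP => i; rewrite !ffunE; case: ifP => // /yx ->.
Qed.

Section CondMutualInformation.
Variables (R : realType) (X : countType) (m : nat) (p : {ffun 'I_m -> X} -> R).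
Hypothesis pmf_p : is_pmf p.
Let p_ge0 x : 0 <= p x := pmf_p.1 x.

Definition marg (A : {set 'I_m}) x := dens p (restr A) x.

(* Pointwise I(S_A; S_B | S_C); only its values where [p x > 0] matter. *)
Definition cmi_dens (A B C : {set 'I_m}) x :=
  ln (marg (A :|: B :|: C) x * marg C x / (marg (A :|: C) x * marg (B :|: C) x)).

Definition CMI (A B C : {set 'I_m}) := expect p (cmi_dens A B C).

Lemma marg_joint2 (A B : {set 'I_m}) x :
  dens p (joint (restr A) (restr B)) x = marg (A :|: B) x.
Proof.
apply: pushpmf_eq => y; split.
  by case=> /restr_eq yA /restr_eq yB; apply/restr_eq => i /setUP[/yA|/yB].
move=> /restr_eq yAB; congr pair; apply/restr_eq => i iS; apply: yAB;
  by rewrite inE iS ?orbT.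
Qed.

Lemma marg_joint3 (A B C : {set 'I_m}) x :
  dens p (joint (restr A) (joint (restr B) (restr C))) x = marg (A :|: B :|: C) x.
Proof.
apply: pushpmf_eq => y; split.
  case=> /restr_eq yA /restr_eq yB /restr_eq yC; apply/restr_eq => i.
  by rewrite !inE => /orP[/orP[/yA|/yB]|/yC].
move=> /restr_eq yABC; congr pair; [|congr pair]; apply/restr_eq => i iS;
  by apply: yABC; rewrite !inE iS ?orbT.
Qed.

Lemma marg_set0 x : marg set0 x = 1.
Proof.
rewrite /marg /dens /pushpmf -[RHS]/(fine 1%E) -pmf_p.2; congr (fine (esum _ _)).
by apply/seteqP; split => // y _; apply/restr_eq => i; rewrite inE.
Qed.

Lemma marg_gt0 A x : 0 < p x -> 0 < marg A x.
Proof. by move=> px; apply: lt_le_trans px (pmf_le_pushpmf pmf_p _ _). Qed.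

Lemma cmi_densE A B C x : 0 < p x -> cmi_dens A B C x =
  ln (marg (A :|: B :|: C) x) + ln (marg C x)
  - ln (marg (A :|: C) x) - ln (marg (B :|: C) x).
Proof.
move=> px; have pos S : marg S x \in Num.pos by rewrite posrE marg_gt0.
by rewrite /cmi_dens ln_div ?lnM ?posrE ?mulr_gt0 ?marg_gt0 //; ring.
Qed.

Lemma cmi_densC A B C : cmi_dens A B C = cmi_dens B A C.
Proof. by apply/funext => x; rewrite /cmi_dens (setUC A B) (mulrC (marg (A :|: C) x)). Qed.

(* Gibbs' inequality applied with [s = 1 / exp (cmi_dens A B C)], whose
   [p]-sum is the total mass of the Markov chain S_A - S_C - S_B. *)
Lemma cmi_dens_gibbs A B C :
  esum_neg (fun x => p x * cmi_dens A B C x) \is a fin_num /\ (0 <= CMI A B C)%E.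
Proof.
pose s x := marg (A :|: C) x * marg (B :|: C) x / (marg (A :|: B :|: C) x * marg C x).
apply: (expect_ln_ge0 pmf_p (s := s)) => // [x|x px|].
- by rewrite divr_ge0 ?mulr_ge0 ?pushpmf_ge0.
- by rewrite /s /cmi_dens invf_div divr_gt0 ?mulr_gt0 ?marg_gt0.
apply: le_trans (esum_cmi_ratio_le1 pmf_p (restr A) (restr C) (restr B)).
apply: le_esum => x _.
by rewrite /s !marg_joint2 marg_joint3 (setUC C A) (setUAC A C B) lexx.
Qed.

Lemma CMI_ge0 A B C : (0 <= CMI A B C)%E.
Proof. by case: (cmi_dens_gibbs A B C). Qed.

Lemma CMIC A B C : CMI A B C = CMI B A C.
Proof. by rewrite /CMI cmi_densC. Qed.

Lemma MI_CMI A B : MI p A B = CMI A B set0.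
Proof.
apply: mutinf_expect => // x px.
by rewrite /cmi_dens !setU0 marg_set0 mulr1 marg_joint2.
Qed.

Lemma MI_setU A B C : MI p (B :|: A) C = (MI p A C + CMI B C A)%E.
Proof.
rewrite !MI_CMI; have [finAC _] := cmi_dens_gibbs A C set0.
have [finBCA _] := cmi_dens_gibbs B C A.
apply: (expectD p_ge0 _ finAC finBCA).2 => x px.
rewrite !cmi_densE // !setU0 marg_set0 ln1 addr0.
by rewrite (setUC C A) (setUAC B C A) (setUC B A); ring.
Qed.

Lemma MIC A B : MI p A B = MI p B A.
Proof. by rewrite !MI_CMI CMIC. Qed.

Lemma MI_ge0 A B : (0 <= MI p A B)%E.
Proof. by rewrite MI_CMI CMI_ge0. Qed.

Lemma MI_set0l B : MI p set0 B = 0%E.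
Proof.
rewrite MI_CMI /CMI /expect /esum_pos /esum_neg.
have cmi0 x : p x * cmi_dens set0 B set0 x = 0.
  have := p_ge0 x; rewrite le0r => /orP[/eqP->|px]; first by rewrite mul0r.
  by rewrite cmi_densE // !(set0U, setU0) marg_set0 ln1; ring.
by rewrite !esum1 ?sube0 // => x _; rewrite cmi0 ?oppr0 maxxx.
Qed.

Lemma MI_le_setUr A B C : (MI p A C <= MI p A (B :|: C))%E.
Proof. by rewrite (MIC A (B :|: C)) MI_setU (MIC C) leeDl ?CMI_ge0. Qed.

Lemma MI_setUl_le A B C : (MI p (B :|: A) C <= MI p A C + MI p B (A :|: C))%E.
Proof.
rewrite MI_setU; apply: leeD2l.
by rewrite (setUC A C) MIC MI_setU CMIC leeDr ?MI_ge0.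
Qed.

Lemma MI_le_sum_MI_set1 (A B : {set 'I_m}) : [disjoint A & B] ->
  (MI p A B <= \sum_(j in A) MI p [set j] ((A :|: B) :\ j))%E.
Proof.
have [n] := ubnP #|A|; elim: n A => // n IH A cardA dAB.
have [->|[i iA]] := set_0Vmem A; first by rewrite MI_set0l big_set0.
have iB : i \notin B by rewrite (disjointFr dAB iA).
have ABi : (A :|: B) :\ i = A :\ i :|: B.
  by apply/setP => t; rewrite !inE; case: eqVneq => // ->; rewrite (negPf iB).
rewrite -[X in MI p X B](setD1K iA) (bigD1 i) //= addeC ABi.
apply: le_trans (MI_setUl_le _ _ _) _; apply: leeD2r.
have cardA' : (#|A :\ i| < n)%N by rewrite (cardsD1 i A) iA add1n ltnS in cardA.
apply: le_trans (IH _ cardA' (disjointWl (subD1set A i) dAB)) _.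
rewrite [leRHS](eq_bigl (mem (A :\ i))) => [|j]; last by rewrite !inE andbC.
apply: lee_sum => j; rewrite !inE => /andP[ji jA].
suff -> : (A :|: B) :\ j = [set i] :|: ((A :\ i :|: B) :\ j) by apply: MI_le_setUr.
apply/setP => t; rewrite !inE; case: (eqVneq t i) => [->|//].
by rewrite iA eq_sym ji.
Qed.

End CondMutualInformation.

Lemma sum_card1 (m : nat) (V : nmodType) (G : {set 'I_m} -> V) :
  \sum_(A : {set 'I_m} | #|A| == 1%N) G A = \sum_(i : 'I_m) G [set i].
Proof.
rewrite -(big_imset _ (in2W set1_inj)) /=; apply: eq_bigl => A.
apply/idP/imsetP => [/cards1P[i ->]|[i _ ->]]; [by exists i|by rewrite cards1].
Qed.

Section DoubleCounting.
Variables (m a b : nat).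
Hypothesis a_gt0 : (0 < a)%N.

Definition pointed_pair (x : {set 'I_m} * {set 'I_m} * 'I_m) :=
  (#|x.1.1| == a) && ((x.1.2 \subset ~: x.1.1) && (#|x.1.2| == b)) && (x.2 \in x.1.1).

Definition pivot (x : {set 'I_m} * {set 'I_m} * 'I_m) : 'I_m * {set 'I_m} :=
  (x.2, (x.1.1 :|: x.1.2) :\ x.2).

Definition pivoted (y : 'I_m * {set 'I_m}) :=
  (y.2 \subset ~: [set y.1]) && (#|y.2| == (a + b).-1).

Lemma pivot_pivoted x : pointed_pair x -> pivoted (pivot x).
Proof.
case: x => [[A B] j] /andP[/and3P[/eqP cardA BA /eqP cardB] jA]; rewrite /pivoted /=.
have AB : [disjoint A & B] by rewrite disjoint_sym disjoints_subset.
apply/andP; split; first by apply/subsetP => t; rewrite !inE => /andP[].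
have -> : (A :|: B) :\ j = A :\ j :|: B.
  apply/setP => t; rewrite !inE; case: eqVneq => [->|] //=.
  by rewrite (disjointFr AB jA).
rewrite cardsU (disjoint_setI0 (disjointWl (subD1set A j) AB)) cards0 subn0 cardB -cardA.
by rewrite (cardsD1 j A) jA.
Qed.

(* The fibre over (i, C) is parametrized by A \ i, an (a-1)-subset of C. *)
Lemma card_pivot_fiber i C : pivoted (i, C) ->
  #|[pred x | pointed_pair x && (pivot x == (i, C))]| = 'C((a + b).-1, a.-1).
Proof.
move=> /andP[/= Ci /eqP cardC].
have iC : i \notin C by apply/negP => /(subsetP Ci); rewrite !inE eqxx.
pose D := [set A' : {set 'I_m} | A' \subset C & #|A'| == a.-1].
pose lift A' := ([set i] :|: A', C :\: A', i).
have iA' A' : A' \in D -> i \notin A'.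
  by rewrite inE => /andP[A'C _]; apply: contra iC => /(subsetP A'C).
have <- : #|lift @: D| = 'C((a + b).-1, a.-1).
  rewrite card_in_imset; first by rewrite cards_draws cardC.
  move=> A1 A2 A1D A2D [/setP eq12 _]; apply/setP => t; have := eq12 t.
  rewrite !inE; case: eqVneq => [->|_] //=.
  by rewrite (negPf (iA' _ A1D)) (negPf (iA' _ A2D)).
apply: eq_card => -[[A B] j]; rewrite !inE /pointed_pair /pivot /=.
apply/andP/imsetP => [[/andP[/and3P[/eqP cardA BA /eqP cardB] jA] /eqP[ji ABj]]|].
  subst j; exists (A :\ i).
    rewrite !inE -ABj setSD ?subsetUl //=.
    by move: cardA; rewrite (cardsD1 i A) jA => <-.
  rewrite /lift setD1K //; congr (_, _, _); apply/setP => t; rewrite -ABj !inE.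
  case: eqVneq => [->|_] /=; first by apply/negbTE/negP => /(subsetP BA); rewrite inE jA.
  by case tA: (t \in A) => //=; apply/negbTE/negP => /(subsetP BA); rewrite inE tA.
move=> [A' A'D [-> -> ->]]; have iA'_ := iA' _ A'D.
move: A'D; rewrite inE => /andP[A'C /eqP cardA']; split; last first.
  apply/eqP; congr (_, _); apply/setP => t; rewrite !inE.
  case: eqVneq => [->|ti] /=; first by rewrite (negPf iC).
  by case tA': (t \in A') => //=; rewrite (subsetP A'C).
rewrite !inE eqxx andbT cardsU1 iA'_ cardA' add1n prednK // eqxx /=.
apply/andP; split; last by rewrite cardsD (setIidPr A'C) cardA' cardC; apply/eqP; lia.
apply/subsetP => t; rewrite !inE => /andP[tA' tC]; rewrite negb_or tA' andbT.
by apply: contraNneq iC => <-.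
Qed.

Lemma sum_pointed_pairs (V : nmodType) (G : 'I_m -> {set 'I_m} -> V) :
  \sum_(A : {set 'I_m} | #|A| == a)
    \sum_(B : {set 'I_m} | (B \subset ~: A) && (#|B| == b))
      \sum_(j in A) G j ((A :|: B) :\ j) =
  \sum_(y | pivoted y) G y.1 y.2 *+ 'C((a + b).-1, a.-1).
Proof.
rewrite pair_big_dep /= pair_big_dep /=.
rewrite (partition_big pivot pivoted) => [|x]; last exact: pivot_pivoted.
apply: eq_bigr => -[i C] iC.
by rewrite -(card_pivot_fiber iC) -sumr_const; apply: eq_big => [x|x /andP[_ /eqP <-]] //.
Qed.

End DoubleCounting.

Lemma mul_bin_trinomial m a b : (a + b <= m)%N ->
  ('C(a + b, a) * 'C(m, a + b) = 'C(m, a) * 'C(m - a, b))%N.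
Proof.
move=> abm; have am : (a <= m)%N by apply: leq_trans abm; rewrite leq_addr.
have fact_ab : ('C(a + b, a) * (a`! * b`!) = (a + b)`!)%N.
  by rewrite -{2}(addKn a b) bin_fact // leq_addr.
have fact_m_ab : ('C(m, a + b) * ((a + b)`! * (m - (a + b))`!) = m`!)%N.
  by rewrite bin_fact.
have fact_m_a : ('C(m, a) * (a`! * (m - a)`!) = m`!)%N by rewrite bin_fact.
have fact_ma_b : ('C(m - a, b) * (b`! * (m - (a + b))`!) = (m - a)`!)%N.
  by rewrite subnDA bin_fact // leq_subRL // addnC.
have fact_gt0 : (0 < a`! * b`! * (m - (a + b))`!)%N by rewrite !muln_gt0 !fact_gt0.
apply/eqP; rewrite -(eqn_pmul2r fact_gt0); apply/eqP.
transitivity m`!; first by rewrite -fact_m_ab -fact_ab; ring.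
by rewrite -fact_m_a -fact_ma_b; ring.
Qed.

Lemma mul_bin_pivot m a b : (0 < a)%N -> (a + b <= m)%N ->
  ('C((a + b).-1, a.-1) * (m * 'C(m.-1, (a + b).-1)) = a * ('C(m, a) * 'C(m - a, b)))%N.
Proof.
move=> a_gt0 abm; have ab_gt0 : (0 < a + b)%N by rewrite addn_gt0 a_gt0.
rewrite mul_bin_diag prednK // mulnA (mulnC _ (a + b)) mul_bin_diag !prednK //.
by rewrite -mulnA mul_bin_trinomial.
Qed.

Lemma IS_coefE (R : realFieldType) m a b : (0 < a)%N -> (a + b <= m)%N ->
  ('C(m, a)%:R^-1 * 'C(m - a, b)%:R^-1 * 'C((a + b).-1, a.-1)%:R : R) =
  a%:R * ('C(m, 1)%:R^-1 * 'C(m - 1, a + b - 1)%:R^-1).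
Proof.
move=> a_gt0 abm; have am : (a <= m)%N by apply: leq_trans abm; rewrite leq_addr.
have bin_neq0 n k : (k <= n)%N -> ('C(n, k)%:R : R) != 0.
  by move=> kn; rewrite pnatr_eq0 -lt0n bin_gt0.
have m_neq0 : (m%:R : R) != 0 by rewrite pnatr_eq0 -lt0n (leq_trans a_gt0).
have binm1_neq0 : ('C(m.-1, (a + b).-1)%:R : R) != 0.
  by rewrite bin_neq0 // -!subn1 leq_sub2r.
have := congr1 (fun n => n%:R : R) (mul_bin_pivot a_gt0 abm).
rewrite /= !natrM => /(canRL (mulfK (mulf_neq0 m_neq0 binm1_neq0))) ->.
by rewrite bin1 !subn1; field; rewrite m_neq0 binm1_neq0 !bin_neq0 // leq_subRL // addnC.
Qed.

Section AveragedMI.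
Variables (R : realType) (X : countType) (m : nat) (p : {ffun 'I_m -> X} -> R).
Hypothesis pmf_p : is_pmf p.
Local Open Scope ereal_scope.

Lemma IS_le_sum_MI_set1 a b : IS p a b <= ('C(m, a)%:R^-1 * 'C(m - a, b)%:R^-1)%R%:E *
  \sum_(A : {set 'I_m} | #|A| == a) \sum_(B : {set 'I_m} | (B \subset ~: A) && (#|B| == b))
     \sum_(j in A) MI p [set j] ((A :|: B) :\ j).
Proof.
have MI0 := MI_ge0 pmf_p.
have sum_MI_ge0 (A B : {set 'I_m}) : 0 <= \sum_(j in A) MI p [set j] ((A :|: B) :\ j).
  by apply: sume_ge0 => j _.
rewrite /IS [leRHS]ge0_sume_distrr => [|A _]; last by apply: sume_ge0 => B _.
apply: lee_sum => A _; rewrite EFinM -muleA lee_wpmul2l ?lee_fin ?invr_ge0 //.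
rewrite [leRHS]ge0_sume_distrr => [|B _] //.
apply: lee_sum => B /andP[BA _]; apply: lee_wpmul2l; first by rewrite lee_fin invr_ge0.
by apply: (MI_le_sum_MI_set1 pmf_p); rewrite disjoint_sym disjoints_subset.
Qed.

Lemma IS_le_sum_pivoted a b : (0 < a)%N ->
  IS p a b <= ('C(m, a)%:R^-1 * 'C(m - a, b)%:R^-1 * 'C((a + b).-1, a.-1)%:R)%R%:E *
    \sum_(y | pivoted a b y) MI p [set y.1] y.2.
Proof.
move=> a_gt0; apply: le_trans (IS_le_sum_MI_set1 a b) _.
rewrite (sum_pointed_pairs b a_gt0 (fun j C => MI p [set j] C)) sumrMnl.
by rewrite [in leRHS]EFinM -muleA mule_natl.
Qed.

Lemma IS1E c : IS p 1 c = ('C(m, 1)%:R^-1 * 'C(m - 1, c)%:R^-1)%R%:E *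
  \sum_(y : 'I_m * {set 'I_m} | (y.2 \subset ~: [set y.1]) && (#|y.2| == c))
    MI p [set y.1] y.2.
Proof.
have MI0 := MI_ge0 pmf_p.
rewrite /IS sum_card1 ge0_sume_distrr //.
under eq_bigr => i _.
  rewrite ge0_sume_distrr => [|B _]; last by rewrite mule_ge0 ?lee_fin ?invr_ge0.
  over.
by rewrite pair_big_dep; apply: eq_bigr => -[i C] _; rewrite muleA -EFinM.
Qed.

End AveragedMI.

Unset Implicit Arguments.
Theorem mainTheorem10 (R : realType) (X : countType) (m : nat)
  (p : {ffun 'I_m -> X} -> R) (a b : nat) :
  is_pmf p -> (1 <= a)%N -> (a + b <= m)%N ->
  (IS p a b <= (a%:R)%:E * IS p 1 (a + b - 1))%E.
Proof.
move=> pmf_p a_gt0 abm.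
apply: le_trans (IS_le_sum_pivoted pmf_p b a_gt0) _.
by rewrite IS_coefE // EFinM -muleA (IS1E pmf_p) !subn1.
Qed.
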